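(* Let $n\ge3$ and $q=\frac{2n}{n-2}$. Let $u_0>0$. There exists a solution $U$ on $[0,\infty)$ of $$-U''=U^{-q-1}-U^{q-1}$$ satisfying $U(0)=u_0$ and $\lim_{x\to\infty}U(x)=1$, with $U$ converging rapidly to $1$ at infinity. Moreover $U$ satisfies $$U'=\sqrt{\tfrac{2}{q}}\left[U^{-q/2}-U^{q/2}\right],$$ and $U'(x)\to0$ rapidly as $x\to\infty$.
   Context: A function $f$ converges rapidly to $L$ at infinity if $\lim_{x\to\infty}|f(x)-L|\,x^m=0$ for every $m\in\mathbb{R}$. *)

From Stdlib Require Import Reals.
From Coquelicot Require Import Coquelicot.
Open Scope R_scope.

(* f converges rapidly to L at infinity:
   lim_{x -> oo} |f x - L| * x^m = 0 for every real m
   (x^m := Rpower x m, well defined for x > 0, i.e. near +oo). *)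
Definition rapid_conv (f : R -> R) (L : R) : Prop :=
  forall m : R, is_lim (fun x => Rabs (f x - L) * Rpower x m) p_infty 0.

From Stdlib Require Import Reals Lra Ranalysis5 ClassicalEpsilon.
From Coquelicot Require Import Coquelicot.
Open Scope R_scope.

(* Put U = exp phi.  The first-order equation U' = c (U^(-q/2) - U^(q/2)) with c = sqrt (2/q)
   becomes the autonomous equation phi' = h (phi) with h p = c (exp (-(q/2+1) p) - exp ((q/2-1) p)),
   and differentiating it once more gives -U'' = U^(-q-1) - U^(q-1) because c^2 q/2 = 1.
   The equilibrium 0 of h attracts exponentially, p h p <= -k p^2, so |phi x| <= |phi 0| exp (-k x);
   this exponential decay of U - 1 and U' implies rapid convergence.  For phi 0 < 0 the solution
   is the inverse of G s = int_(phi 0)^s dt / h t, which is defined on all of [0, oo) because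
   h t = O(|t|) makes G diverge as s -> 0-; the case phi 0 > 0 follows by the symmetry p |-> -p. *)

Lemma exp_le_exp (x y : R) : x <= y -> exp x <= exp y.
Proof.
  intros [Hlt | ->]; [left; apply exp_increasing, Hlt | right; reflexivity].
Qed.

Lemma Rabs_exp_sub1_le (p : R) : Rabs (exp p - 1) <= Rabs p * exp (Rabs p).
Proof.
  pose proof (exp_ineq1_le p) as Hp. pose proof (exp_ineq1_le (- p)) as Hn.
  assert (Einv : exp (- p) * exp p = 1)
    by (rewrite <- exp_plus, Rplus_opp_l; apply exp_0).
  pose proof (exp_pos p).
  destruct (Rle_lt_dec 0 p) as [Hp0|Hp0].
  - rewrite (Rabs_pos_eq p Hp0), Rabs_pos_eq by lra. nra.
  - assert (exp p < 1) by (rewrite <- exp_0; apply exp_increasing; lra).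
    rewrite (Rabs_left p Hp0), Rabs_left by lra. nra.
Qed.

Lemma Rabs_exp_mul_sub1_le (a r p : R) : Rabs p <= r ->
  Rabs (exp (a * p) - 1) <= Rabs a * exp (Rabs a * r) * Rabs p.
Proof.
  intros Hp. eapply Rle_trans; [apply Rabs_exp_sub1_le|].
  rewrite Rabs_mult.
  assert (exp (Rabs a * Rabs p) <= exp (Rabs a * r)).
  { apply exp_le_exp. apply Rmult_le_compat_l; [apply Rabs_pos | exact Hp]. }
  replace (Rabs a * exp (Rabs a * r) * Rabs p) with (Rabs a * Rabs p * exp (Rabs a * r)) by ring.
  apply Rmult_le_compat_l; [apply Rmult_le_pos; apply Rabs_pos | assumption].
Qed.

Lemma is_lim_exp_neg_mul_Rpower (k m : R) : 0 < k ->
  is_lim (fun x => exp (- k * x) * Rpower x m) p_infty 0.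
Proof.
  intros Hk.
  apply (is_lim_ext_loc (fun x => exp (x * (m * (ln x / x) + - k)))).
  { exists 0; intros x Hx. unfold Rpower. rewrite <- exp_plus. f_equal. field. lra. }
  apply (is_lim_comp exp _ p_infty 0 m_infty); [exact is_lim_exp_m| |].
  - replace m_infty with (Rbar_mult p_infty (m * 0 + - k)).
    2: { simpl. destruct (Rle_dec 0 (m * 0 + - k)); [exfalso; nra | reflexivity]. }
    apply is_lim_mult; [apply is_lim_id| |].
    + apply (is_lim_plus _ _ _ (m * 0) (- k)); [| apply is_lim_const | reflexivity].
      apply (is_lim_scal_l _ m p_infty 0 is_lim_div_ln_p).
    + simpl. lra.
  - exists 0; intros x _; discriminate.
Qed.

Definition exp_decay (f : R -> R) (L k : R) : Prop :=
  exists C, forall x, 0 <= x -> Rabs (f x - L) <= C * exp (- k * x).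

Lemma exp_decay_rapid_conv (f : R -> R) (L k : R) : 0 < k -> exp_decay f L k -> rapid_conv f L.
Proof.
  intros Hk [C Hf] m.
  apply (is_lim_le_le_loc (fun _ => 0) (fun x => C * (exp (- k * x) * Rpower x m))).
  - exists 0; intros x Hx.
    assert (0 < Rpower x m) by apply exp_pos.
    split; [apply Rmult_le_pos; [apply Rabs_pos | lra]|].
    rewrite <- Rmult_assoc. apply Rmult_le_compat_r; [lra | apply Hf; lra].
  - apply is_lim_const.
  - replace (Finite 0) with (Rbar_mult C 0) by (simpl; f_equal; ring).
    apply is_lim_scal_l, is_lim_exp_neg_mul_Rpower, Hk.
Qed.

Lemma rapid_conv_is_lim (f : R -> R) (L : R) : rapid_conv f L -> is_lim f p_infty L.
Proof.
  intros Hf. apply is_lim_spec. intros eps.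
  destruct (proj2 (is_lim_spec _ _ _) (Hf 0) eps) as [M HM].
  exists M; intros x Hx. specialize (HM x Hx).
  unfold Rpower in HM. rewrite Rmult_0_l, exp_0, Rmult_1_r, Rminus_0_r, Rabs_Rabsolu in HM.
  exact HM.
Qed.

Lemma exp_decay_comp (g phi : R -> R) (L K A k : R) :
  (forall p, Rabs p <= A -> Rabs (g p - L) <= K * Rabs p) ->
  (forall x, 0 <= x -> Rabs (phi x) <= A * exp (- k * x)) -> 0 < k ->
  exp_decay (fun x => g (phi x)) L k.
Proof.
  intros Hg Hphi Hk. exists (Rabs K * A). intros x Hx.
  assert (exp (- k * x) <= 1) by (rewrite <- exp_0; apply exp_le_exp; nra).
  pose proof (Rabs_pos (phi x)). pose proof (exp_pos (- k * x)). pose proof (Hphi x Hx).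
  eapply Rle_trans; [apply Hg; nra|].
  eapply Rle_trans; [apply Rmult_le_compat_r; [apply Rabs_pos | apply Rle_abs]|].
  rewrite Rmult_assoc. apply Rmult_le_compat_l; [apply Rabs_pos | assumption].
Qed.

Definition exp_diff (c a b p : R) : R := c * (exp (a * p) - exp (b * p)).

Lemma is_derive_exp_diff (c a b p : R) :
  is_derive (exp_diff c a b) p (c * (a * exp (a * p) - b * exp (b * p))).
Proof. unfold exp_diff. auto_derive; [exact I | ring]. Qed.

Lemma exp_diff_lin_bound (c a b r p : R) : Rabs p <= r ->
  Rabs (exp_diff c a b p) <= Rabs c * (Rabs a * exp (Rabs a * r) + Rabs b * exp (Rabs b * r)) * Rabs p.
Proof.
  intros Hp. unfold exp_diff.
  pose proof (Rabs_exp_mul_sub1_le a r p Hp). pose proof (Rabs_exp_mul_sub1_le b r p Hp).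
  replace (exp (a * p) - exp (b * p)) with ((exp (a * p) - 1) - (exp (b * p) - 1)) by ring.
  rewrite Rabs_mult. rewrite Rmult_assoc. apply Rmult_le_compat_l; [apply Rabs_pos|].
  eapply Rle_trans; [apply Rabs_triang|]. rewrite Rabs_Ropp. lra.
Qed.

Lemma exp_diff_attracting (c a b p : R) : 0 <= c -> 0 <= a -> 0 <= b ->
  p * exp_diff c (- a) b p <= - (c * Rmin a b) * (p * p).
Proof.
  intros Hc Ha Hb. unfold exp_diff.
  pose proof (Rmin_l a b). pose proof (Rmin_r a b). pose proof (Rmin_glb _ _ _ Ha Hb).
  destruct (Rle_lt_dec 0 p) as [Hp|Hp].
  - pose proof (exp_ineq1_le (b * p)).
    assert (exp (- a * p) <= 1) by (rewrite <- exp_0; apply exp_le_exp; nra).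
    assert (exp (- a * p) - exp (b * p) <= - Rmin a b * p) by nra.
    assert (0 <= c * p) by nra. nra.
  - pose proof (exp_ineq1_le (- a * p)).
    assert (exp (b * p) <= 1) by (rewrite <- exp_0; apply exp_le_exp; nra).
    assert (- Rmin a b * p <= exp (- a * p) - exp (b * p)) by nra.
    assert (c * p <= 0) by nra. nra.
Qed.

Lemma rapid_conv_exp_comp (phi : R -> R) (A k : R) : 0 < k ->
  (forall x, 0 <= x -> Rabs (phi x) <= A * exp (- k * x)) ->
  rapid_conv (fun x => exp (phi x)) 1.
Proof.
  intros Hk Hphi. apply (exp_decay_rapid_conv _ _ k Hk).
  apply (exp_decay_comp exp phi 1 (exp A) A k); [| exact Hphi | exact Hk].
  intros p Hp. eapply Rle_trans; [apply Rabs_exp_sub1_le|]. rewrite Rmult_comm.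
  apply Rmult_le_compat_r; [apply Rabs_pos | apply exp_le_exp, Hp].
Qed.

Lemma rapid_conv_exp_diff_comp (phi : R -> R) (c a b A k : R) : 0 < k ->
  (forall x, 0 <= x -> Rabs (phi x) <= A * exp (- k * x)) ->
  rapid_conv (fun x => exp_diff c a b (phi x)) 0.
Proof.
  intros Hk Hphi. apply (exp_decay_rapid_conv _ _ k Hk).
  eapply exp_decay_comp; [| exact Hphi | exact Hk].
  intros p Hp. rewrite Rminus_0_r. apply exp_diff_lin_bound, Hp.
Qed.

Lemma nondecreasing_of_derive_ge0 (f df : R -> R) (a b : R) : a <= b ->
  (forall x, a <= x <= b -> is_derive f x (df x)) ->
  (forall x, a <= x <= b -> 0 <= df x) -> f a <= f b.
Proof.
  intros Hab Hf Hdf.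
  destruct (MVT_gen f a b df) as [xi [Hxi Hmvt]];
    rewrite ?Rmin_left, ?Rmax_right in * by lra.
  - intros x Hx. apply Hf; lra.
  - intros x Hx. apply continuity_pt_filterlim, (ex_derive_continuous f).
    exists (df x); apply Hf; lra.
  - pose proof (Hdf xi Hxi). nra.
Qed.

Section RightInverse.

Variables (G g phi : R -> R) (a b c : R).
Hypothesis G_derive : forall t, a < t < b -> is_derive G t (g t).
Hypothesis g_pos : forall t, a < t < b -> 0 < g t.
Hypothesis phi_right_inverse : forall y, c < y -> a < phi y < b /\ G (phi y) = y.

Let G_incr s t : a < s -> s < t -> t < b -> G s < G t.
Proof.
  intros Hs Hst Ht.
  apply (incr_function G a b g); simpl; intros; [apply G_derive | apply g_pos | ..]; lra.
Qed.

Let G_continuous t : a < t < b -> continuity_pt G t.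
Proof.
  intros Ht. apply continuity_pt_filterlim, (ex_derive_continuous G).
  exists (g t); apply G_derive, Ht.
Qed.

Let right_inverse_lt y1 y2 : c < y1 -> y1 < y2 -> phi y1 < phi y2.
Proof.
  intros H1 H12.
  destruct (phi_right_inverse y1 H1) as [R1 E1], (phi_right_inverse y2 ltac:(lra)) as [R2 E2].
  destruct (Rlt_le_dec (phi y1) (phi y2)) as [L|[L|L]]; [exact L | |].
  - pose proof (G_incr (phi y2) (phi y1) ltac:(lra) L ltac:(lra)). lra.
  - rewrite L in E2. lra.
Qed.

Let right_inverse_le y1 y2 : c < y1 -> y1 <= y2 -> phi y1 <= phi y2.
Proof. intros H1 [H12 | <-]; [left; apply right_inverse_lt | right]; auto. Qed.

Lemma is_derive_right_inverse y : c < y -> is_derive phi y (/ g (phi y)).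
Proof.
  intros Hy.
  set (lb := (c + y) / 2). set (ub := y + 1).
  destruct (phi_right_inverse lb ltac:(unfold lb; lra)) as [Rl El].
  destruct (phi_right_inverse ub ltac:(unfold ub; lra)) as [Ru Eu].
  assert (inverse_on : forall z, lb <= z <= ub -> comp G phi z = id z).
  { intros z Hz. unfold comp, id. apply phi_right_inverse. unfold lb in Hz. lra. }
  assert (range_on : forall z, lb <= z <= ub -> phi lb <= phi z <= phi ub).
  { intros z Hz. split; apply right_inverse_le; unfold lb in *; lra. }
  assert (Hy_range : phi lb <= phi y <= phi ub) by (apply range_on; unfold lb, ub; lra).
  assert (Prf : forall t, phi lb <= t <= phi ub -> derivable_pt G t).
  { intros t Ht. exists (g t). apply is_derive_Reals, G_derive. lra. }
  assert (phi_cont : continuity_pt phi y).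
  { apply (continuity_pt_recip_interv G phi (phi lb) (phi ub)).
    - apply right_inverse_lt; unfold lb, ub; lra.
    - intros s t Hs Hst Ht. apply G_incr; lra.
    - intros z Hz1 Hz2. rewrite El, Eu in *. apply inverse_on; lra.
    - intros z Hz1 Hz2. rewrite El, Eu in *. apply range_on; lra.
    - intros t Ht. apply G_continuous; lra.
    - rewrite El, Eu. unfold lb, ub; lra. }
  assert (Hd : derive_pt G (phi y) (Prf (phi y) Hy_range) = g (phi y)).
  { apply derive_pt_eq_0, is_derive_Reals, G_derive. lra. }
  assert (Hgy : 0 < g (phi y)) by (apply g_pos; lra).
  pose proof (derivable_pt_lim_recip_interv G phi lb ub y Prf phi_cont
    ltac:(unfold lb, ub; lra) ltac:(unfold lb, ub; lra) Hy_range inverse_on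
    ltac:(rewrite Hd; lra)) as Hinv.
  rewrite Hd in Hinv. apply is_derive_Reals in Hinv.
  unfold Rdiv in Hinv. rewrite Rmult_1_l in Hinv. exact Hinv.
Qed.

End RightInverse.

Section NegativeInitialValue.

Variables (h : R -> R) (k K s0 : R).
Hypothesis h_cont : forall t, t < 0 -> continuous h t.
Hypothesis k_pos : 0 < k.
Hypothesis h_ge_lin : forall t, t < 0 -> k * - t <= h t.
Hypothesis h_le_lin : forall t, s0 <= t < 0 -> h t <= K * - t.
Hypothesis s0_neg : s0 < 0.

Let h_pos t : t < 0 -> 0 < h t.
Proof. intros Ht. pose proof (h_ge_lin t Ht). nra. Qed.

Let K_pos : 0 < K.
Proof. pose proof (h_pos s0 s0_neg). pose proof (h_le_lin s0 ltac:(lra)). nra. Qed.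

Let G (s : R) : R := RInt (fun t => / h t) s0 s.

Let G_derive x : x < 0 -> is_derive G x (/ h x).
Proof.
  intros Hx.
  assert (inv_h_cont : forall t, t < 0 -> continuous (fun t => / h t) t).
  { intros t Ht. apply continuous_Rinv_comp; [apply h_cont, Ht | apply Rgt_not_eq, h_pos, Ht]. }
  apply (is_derive_RInt (fun t => / h t) G s0 x); [| apply inv_h_cont, Hx].
  assert (He : 0 < - x / 2) by lra.
  exists (mkposreal _ He). intros y Hy.
  unfold ball in Hy; simpl in Hy; unfold AbsRing_ball, abs, minus, plus, opp in Hy; simpl in Hy.
  apply Rabs_def2 in Hy.
  apply (RInt_correct (V := R_CompleteNormedModule)), ex_RInt_continuous. intros z Hz. apply inv_h_cont.
  pose proof (Rmax_lub_lt s0 y 0 s0_neg). lra.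
Qed.

Let G_incr s t : s < t -> t < 0 -> G s < G t.
Proof.
  intros Hst Ht. apply (incr_function G m_infty 0 (fun t => / h t)); simpl; try easy.
  - intros x _ Hx. apply G_derive, Hx.
  - intros x _ Hx. apply Rinv_0_lt_compat, h_pos, Hx.
Qed.

Let G_s0 : G s0 = 0.
Proof. exact (RInt_point (V := R_CompleteNormedModule) s0 _). Qed.

(* Comparing [1/h] with [1/(K |t|)]: [G s + ln (-s) / K] is nondecreasing on [s0, 0). *)
Let G_unbounded X : exists s, s0 <= s < 0 /\ X <= G s.
Proof.
  set (Y := Rmax X 0). set (s1 := s0 * exp (- K * Y)).
  assert (HY : X <= Y /\ 0 <= Y) by (split; [apply Rmax_l | apply Rmax_r]).
  assert (Hs1 : s0 <= s1 < 0).
  { assert (exp (- K * Y) <= 1) by (rewrite <- exp_0; apply exp_le_exp; nra).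
    pose proof (exp_pos (- K * Y)). unfold s1; split; nra. }
  assert (Hmono : G s0 + ln (- s0) / K <= G s1 + ln (- s1) / K).
  { apply (nondecreasing_of_derive_ge0 (fun s => G s + ln (- s) / K) (fun s => / h s + / s / K));
      [lra | |].
    - intros x Hx. apply (is_derive_plus G (fun s => ln (- s) / K)); [apply G_derive; lra|].
      auto_derive; [lra | field; lra].
    - intros x Hx.
      assert (/ (K * - x) <= / h x) by (apply Rinv_le_contravar; [apply h_pos | apply h_le_lin]; lra).
      replace (/ x / K) with (- / (K * - x)) by (field; lra). lra. }
  assert (Hln : ln (- s1) = ln (- s0) - K * Y).
  { unfold s1. replace (- (s0 * exp (- K * Y))) with (- s0 * exp (- K * Y)) by ring.
    rewrite ln_mult, ln_exp by (lra || apply exp_pos). ring. }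
  rewrite G_s0, Hln in Hmono.
  replace ((ln (- s0) - K * Y) / K) with (ln (- s0) / K - Y) in Hmono by (field; lra).
  exists s1. split; [exact Hs1 | lra].
Qed.

Let G_onto y : G (2 * s0) < y -> exists s, 2 * s0 < s < 0 /\ G s = y.
Proof.
  intros Hy. destruct (G_unbounded y) as [s1 [Hs1 HGs1]].
  destruct (f_interv_is_interv G (2 * s0) s1 y ltac:(lra) ltac:(lra)) as [s [Hs HGs]].
  - intros t Ht. apply continuity_pt_filterlim, (ex_derive_continuous G).
    exists (/ h t); apply G_derive; lra.
  - exists s. split; [|exact HGs].
    destruct (Req_dec s (2 * s0)) as [E|E]; [rewrite E in HGs|]; lra.
Qed.

(* [phi y * exp (k y)] is nondecreasing because [h] pushes negative values up at rate at least [k]. *)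
Let neg_trajectory_decay (phi : R -> R) : phi 0 = s0 ->
  (forall x, 0 <= x -> is_derive phi x (h (phi x))) ->
  (forall x, 0 <= x -> phi x < 0) ->
  forall x, 0 <= x -> Rabs (phi x) <= Rabs s0 * exp (- k * x).
Proof.
  intros phi0 phi_derive phi_neg x Hx.
  assert (Hmono : phi 0 * exp (k * 0) <= phi x * exp (k * x)).
  { apply (nondecreasing_of_derive_ge0 (fun y => phi y * exp (k * y))
      (fun y => h (phi y) * exp (k * y) + phi y * (k * exp (k * y)))); [lra | |].
    - intros y Hy. apply (is_derive_mult phi (fun y => exp (k * y)));
        [apply phi_derive; lra | auto_derive; [exact I | ring] | apply Rmult_comm].
    - intros y Hy. pose proof (h_ge_lin (phi y) (phi_neg y ltac:(lra))).
      pose proof (exp_pos (k * y)). nra. }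
  rewrite phi0, Rmult_0_r, exp_0, Rmult_1_r in Hmono.
  assert (E : exp (k * x) * exp (- k * x) = 1)
    by (rewrite <- exp_plus; replace (k * x + - k * x) with 0 by ring; apply exp_0).
  pose proof (exp_pos (- k * x)). pose proof (phi_neg x Hx).
  rewrite !Rabs_left by lra. nra.
Qed.

Lemma neg_initial_value_solution : exists phi : R -> R, phi 0 = s0 /\
  (forall x, 0 <= x -> is_derive phi x (h (phi x))) /\
  (forall x, 0 <= x -> Rabs (phi x) <= Rabs s0 * exp (- k * x)).
Proof.
  set (T := 2 * s0).
  assert (GT_neg : G T < 0) by (rewrite <- G_s0; apply G_incr; unfold T; lra).
  set (phi y := epsilon (inhabits 0) (fun s => G T < y -> T < s < 0 /\ G s = y)).
  assert (Hphi : forall y, G T < y -> T < phi y < 0 /\ G (phi y) = y).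
  { intros y Hy. apply (epsilon_spec (inhabits 0) (fun s => G T < y -> T < s < 0 /\ G s = y)); [|exact Hy].
    destruct (G_onto y Hy) as [s Hs]. exists s. intros _. exact Hs. }
  assert (G_le_inv : forall s t, s < 0 -> G s <= G t -> s <= t).
  { intros s t Hs HG. destruct (Rle_lt_dec s t) as [L|L]; [exact L|].
    pose proof (G_incr t s L Hs). lra. }
  assert (phi_derive : forall x, 0 <= x -> is_derive phi x (h (phi x))).
  { intros x Hx. rewrite <- (Rinv_inv (h (phi x))).
    apply (is_derive_right_inverse G (fun t => / h t) phi T 0 (G T)); [| | exact Hphi | lra].
    - intros t Ht. apply G_derive; lra.
    - intros t Ht. apply Rinv_0_lt_compat, h_pos; lra. }
  destruct (Hphi 0 GT_neg) as [R0 E0].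
  assert (phi0 : phi 0 = s0).
  { apply Rle_antisym; apply G_le_inv; rewrite ?G_s0, ?E0; lra. }
  exists phi. split; [exact phi0 | split; [exact phi_derive|]].
  apply neg_trajectory_decay; [exact phi0 | exact phi_derive |].
  intros x Hx. apply Hphi. lra.
Qed.

End NegativeInitialValue.

Definition attracting_field (h : R -> R) (k : R) : Prop :=
  (forall t, continuous h t) /\
  (forall t, t * h t <= - k * (t * t)) /\
  (forall r, exists K, forall t, Rabs t <= r -> Rabs (h t) <= K * Rabs t).

Lemma attracting_field_reflect (h : R -> R) (k : R) :
  attracting_field h k -> attracting_field (fun t => - h (- t)) k.
Proof.
  intros [h_cont [h_attr h_lin]]. split; [|split].
  - intros t. apply (continuous_opp (fun t => h (- t))), (continuous_comp Ropp h).
    + apply (ex_derive_continuous Ropp). auto_derive. exact I.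
    + apply h_cont.
  - intros t. pose proof (h_attr (- t)). nra.
  - intros r. destruct (h_lin r) as [K HK]. exists K. intros t Ht.
    rewrite Rabs_Ropp, <- (Rabs_Ropp t). apply HK. rewrite Rabs_Ropp. exact Ht.
Qed.

Lemma attracting_field_exp_diff (c a b : R) : 0 <= c -> 0 <= a -> 0 <= b ->
  attracting_field (exp_diff c (- a) b) (c * Rmin a b).
Proof.
  intros Hc Ha Hb. split; [|split].
  - intros t. apply (ex_derive_continuous (exp_diff c (- a) b)).
    eexists. apply is_derive_exp_diff.
  - intros t. apply exp_diff_attracting; assumption.
  - intros r. eexists. intros t Ht. apply exp_diff_lin_bound, Ht.
Qed.

Lemma attracting_neg_solution (h : R -> R) (k s0 : R) : 0 < k -> attracting_field h k -> s0 < 0 ->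
  exists phi : R -> R, phi 0 = s0 /\
    (forall x, 0 <= x -> is_derive phi x (h (phi x))) /\
    (forall x, 0 <= x -> Rabs (phi x) <= Rabs s0 * exp (- k * x)).
Proof.
  intros Hk [h_cont [h_attr h_lin]] Hs0.
  destruct (h_lin (- s0)) as [K HK].
  apply (neg_initial_value_solution h k K s0); [intros t _; apply h_cont | exact Hk | | | exact Hs0].
  - intros t Ht. pose proof (h_attr t). nra.
  - intros t Ht. pose proof (HK t ltac:(rewrite Rabs_left; lra)) as Hb.
    rewrite (Rabs_left t) in Hb by lra. eapply Rle_trans; [apply Rle_abs | exact Hb].
Qed.

Lemma attracting_ode_solution (h : R -> R) (k s0 : R) : 0 < k -> attracting_field h k ->
  exists phi : R -> R, phi 0 = s0 /\
    (forall x, 0 <= x -> is_derive phi x (h (phi x))) /\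
    (forall x, 0 <= x -> Rabs (phi x) <= Rabs s0 * exp (- k * x)).
Proof.
  intros Hk Hh.
  destruct (Rtotal_order s0 0) as [Hs0 | [-> | Hs0]].
  - exact (attracting_neg_solution h k s0 Hk Hh Hs0).
  - assert (h0 : h 0 = 0).
    { destruct Hh as [_ [_ h_lin]]. destruct (h_lin 0) as [K HK].
      pose proof (HK 0 ltac:(rewrite Rabs_R0; lra)) as Hh0. rewrite Rabs_R0, Rmult_0_r in Hh0.
      apply Rabs_eq_0. pose proof (Rabs_pos (h 0)). lra. }
    exists (fun _ => 0). split; [reflexivity | split].
    + intros x _. rewrite h0. apply (is_derive_const 0).
    + intros x _. rewrite Rabs_R0, Rmult_0_l. lra.
  - destruct (attracting_neg_solution _ k (- s0) Hk (attracting_field_reflect h k Hh)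
      ltac:(lra)) as [psi [psi0 [psi_derive psi_decay]]].
    exists (fun x => - psi x). split; [rewrite psi0; ring | split].
    + intros x Hx. rewrite <- (Ropp_involutive (h (- psi x))).
      apply (is_derive_opp psi), psi_derive, Hx.
    + intros x Hx. rewrite Rabs_Ropp, <- (Rabs_Ropp s0). apply psi_decay, Hx.
Qed.

Lemma exp_plus_eq (a b d : R) : a + b = d -> exp a * exp b = exp d.
Proof. intros <-. symmetry. apply exp_plus. Qed.

Lemma exp_diff_mul_exp (c q p : R) :
  exp_diff c (- (q / 2 + 1)) (q / 2 - 1) p * exp p = exp_diff c (- q / 2) (q / 2) p.
Proof.
  unfold exp_diff. rewrite Rmult_assoc, Rmult_minus_distr_r.
  rewrite (exp_plus_eq _ p (- q / 2 * p)), (exp_plus_eq _ p (q / 2 * p)) by field.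
  reflexivity.
Qed.

(* The cross terms [exp (- p)] cancel, and [c ^ 2 q / 2 = 1]. *)
Lemma exp_diff_mul_derive (c q p : R) : q <> 0 -> c * c = 2 / q ->
  exp_diff c (- (q / 2 + 1)) (q / 2 - 1) p * (c * (- q / 2 * exp (- q / 2 * p) - q / 2 * exp (q / 2 * p)))
  = - (exp ((- q - 1) * p) - exp ((q - 1) * p)).
Proof.
  intros Hq Hc. unfold exp_diff.
  assert (cross : exp (- (q / 2 + 1) * p) * exp (q / 2 * p) = exp ((q / 2 - 1) * p) * exp (- q / 2 * p)).
  { rewrite !(exp_plus_eq _ _ (- p)) by field. reflexivity. }
  transitivity (- (c * c * (q / 2)) * (exp (- (q / 2 + 1) * p) * exp (- q / 2 * p)
                                      - exp ((q / 2 - 1) * p) * exp (q / 2 * p))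
                - c * c * (q / 2) * (exp (- (q / 2 + 1) * p) * exp (q / 2 * p)
                                      - exp ((q / 2 - 1) * p) * exp (- q / 2 * p))); [field|].
  rewrite cross, Rminus_diag, Rmult_0_r, Rminus_0_r.
  rewrite (exp_plus_eq _ _ ((- q - 1) * p)), (exp_plus_eq _ _ ((q - 1) * p)), Hc by field.
  field. exact Hq.
Qed.

Lemma exp_solution_derive (phi : R -> R) (c q x : R) :
  is_derive phi x (exp_diff c (- (q / 2 + 1)) (q / 2 - 1) (phi x)) ->
  is_derive (fun t => exp (phi t)) x (exp_diff c (- q / 2) (q / 2) (phi x)).
Proof.
  intros Hphi. rewrite <- exp_diff_mul_exp.
  apply (is_derive_comp exp phi); [apply is_derive_exp | exact Hphi].
Qed.

Lemma exp_diff_solution_derive (phi : R -> R) (c q x : R) : q <> 0 -> c * c = 2 / q ->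
  is_derive phi x (exp_diff c (- (q / 2 + 1)) (q / 2 - 1) (phi x)) ->
  is_derive (fun t => exp_diff c (- q / 2) (q / 2) (phi t)) x
    (- (exp ((- q - 1) * phi x) - exp ((q - 1) * phi x))).
Proof.
  intros Hq Hc Hphi. rewrite <- (exp_diff_mul_derive c q (phi x) Hq Hc).
  apply (is_derive_comp (exp_diff c (- q / 2) (q / 2)) phi); [apply is_derive_exp_diff | exact Hphi].
Qed.

Lemma sobolev_exponent_gt_2 (n : nat) : (3 <= n)%nat -> 2 < 2 * INR n / (INR n - 2).
Proof.
  intros hn. assert (3 <= INR n) by (replace 3 with (INR 3) by (simpl; ring); apply le_INR, hn).
  replace (2 * INR n / (INR n - 2)) with (2 + 4 / (INR n - 2)) by (field; lra).
  assert (0 < 4 / (INR n - 2)) by (apply Rdiv_lt_0_compat; lra). lra.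
Qed.

Theorem proposition4p2 (n : nat) (hn : (3 <= n)%nat) (u0 : R) (hu0 : 0 < u0) :
  let q := 2 * INR n / (INR n - 2) in
  exists U U' : R -> R,
    (forall x, 0 <= x -> 0 < U x) /\
    (forall x, 0 <= x -> is_derive U x (U' x)) /\
    (forall x, 0 <= x ->
       is_derive U' x (- (Rpower (U x) (- q - 1) - Rpower (U x) (q - 1)))) /\
    U 0 = u0 /\
    is_lim U p_infty 1 /\
    rapid_conv U 1 /\
    (forall x, 0 <= x ->
       U' x = sqrt (2 / q) * (Rpower (U x) (- q / 2) - Rpower (U x) (q / 2))) /\
    is_lim U' p_infty 0 /\
    rapid_conv U' 0.
Proof.
  intros q.
  assert (Hq : 2 < q) by exact (sobolev_exponent_gt_2 n hn).
  set (c := sqrt (2 / q)).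
  assert (Hc : 0 < c) by (apply sqrt_lt_R0, Rdiv_lt_0_compat; lra).
  assert (Hcc : c * c = 2 / q) by (apply sqrt_sqrt, Rlt_le, Rdiv_lt_0_compat; lra).
  set (k := c * Rmin (q / 2 + 1) (q / 2 - 1)).
  assert (Hk : 0 < k) by (apply Rmult_lt_0_compat, Rmin_pos; lra).
  destruct (attracting_ode_solution _ k (ln u0) Hk
    (attracting_field_exp_diff c (q / 2 + 1) (q / 2 - 1) ltac:(lra) ltac:(lra) ltac:(lra)))
    as [phi [phi0 [phi_derive phi_decay]]].
  assert (Rpower_exp : forall a x, Rpower (exp (phi x)) a = exp (a * phi x))
    by (intros; unfold Rpower; rewrite ln_exp; reflexivity).
  pose proof (rapid_conv_exp_comp phi _ k Hk phi_decay) as U_rapid.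
  pose proof (rapid_conv_exp_diff_comp phi c (- q / 2) (q / 2) _ k Hk phi_decay) as U'_rapid.
  exists (fun x => exp (phi x)), (fun x => exp_diff c (- q / 2) (q / 2) (phi x)).
  split; [intros; apply exp_pos|].
  split; [intros x Hx; apply exp_solution_derive, phi_derive, Hx|].
  split; [intros x Hx; rewrite !Rpower_exp; apply exp_diff_solution_derive, phi_derive; lra|].
  split; [rewrite phi0; apply exp_ln, hu0|].
  split; [exact (rapid_conv_is_lim _ _ U_rapid) | split; [exact U_rapid|]].
  split; [intros x _; rewrite !Rpower_exp; reflexivity|].
  split; [exact (rapid_conv_is_lim _ _ U'_rapid) | exact U'_rapid].
Qed.
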